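(* Let $u$ and $\hat u=u+v$ be quasidefinite, with $$\langle P(x),Q(y)\rangle_v=\sum_{b=1}^{\tilde q}\sum_{l=0}^{\tilde\kappa^{(b)}-1}\sum_{j=1}^q\sum_{m=0}^{\kappa^{(j)}-1}\frac1{l!\,m!}P^{(l)}(\tilde x_b)\,\beta^{(b,j)}_{l,m}\,\big(Q^{(m)}(x_j)\big)^\top,$$ assume the functionals $(\beta^{(j)}_m)_x=\sum_{b,l}\beta^{(b,j)}_{l,m}\frac{(-1)^l}{l!}\delta^{(l)}(x-\tilde x_b)$ are linearly independent, and assume $\tilde{\mathbb I}^{\perp^R_u}=\{0_p\}$ or $\mathbb I^{\perp^L_u}=\{0_p\}$. Then for every $n\ge1$ the matrices $I_{Np}+\tilde{\mathcal J}_{K_{n-1}}\beta$ and $I_{\tilde Np}+\beta\tilde{\mathcal J}_{K_{n-1}}$ are nonsingular and $$\hat P^{[1]}_n(x)=P^{[1]}_n(x)-\tilde{\mathcal J}_{P^{[1]}_n}(I_{\tilde Np}+\beta\tilde{\mathcal J}_{K_{n-1}})^{-1}\beta\,\mathcal J^{[0,1]}_{K_{n-1}}(x),$$ $$(\hat P^{[2]}_n(y))^\top=(P^{[2]}_n(y))^\top-\tilde{\mathcal J}^{[1,0]}_{K_{n-1}}(y)(I_{\tilde Np}+\beta\tilde{\mathcal J}_{K_{n-1}})^{-1}\beta(\mathcal J_{P^{[2]}_n})^\top,$$ $$\hat H_n=H_n+\tilde{\mathcal J}_{P^{[1]}_n}(I_{\tilde Np}+\beta\tilde{\mathcal J}_{K_{n-1}})^{-1}\beta(\mathcal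 J_{P^{[2]}_n})^\top .$$
   Context: $p\ge1$ fixed, ${}^\top$ transpose. $x_1,\dots,x_q$ distinct real with multiplicities $\kappa^{(j)}$, $N=\sum\kappa^{(j)}$; $\tilde x_1,\dots,\tilde x_{\tilde q}$ distinct real with multiplicities $\tilde\kappa^{(b)}$, $\tilde N=\sum\tilde\kappa^{(b)}$; $\beta^{(b,j)}_{l,m}\in\mathbb C^{p\times p}$. A matrix of generalized kernels $w_{x,y}$ defines $(\langle P(x),Q(y)\rangle_w)_{i,j}=\sum_{k,l}\langle (w_{x,y})_{k,l},P_{i,k}(x)Q_{j,l}(y)\rangle$; quasidefinite means all leading block truncations of $(\langle I_px^k,I_py^l\rangle_w)_{k,l\ge0}$ are nonsingular; then $G=S_1^{-1}HS_2^{-\top}$ (unique, $S_i$ block lower unitriangular, $H=\operatorname{diag}(H_n)$) gives monic $P^{[i]}_n(x)=\sum_{k\le n}(S_i)_{n,k}x^k$ with $\langle P^{[1]}_n,P^{[2]}_m\rangle_w=\delta_{n,m}H_n$ and $K_n(x,y)=\sum_{k=0}^n(P^{[2]}_k(y))^\top H_k^{-1}P^{[1]}_k(x)$; hats denote objects of $\hat u$. Pairing $(\langle P,\beta_x\rangle)_{i,l}=\sum_k\langle(\beta_x)_{k,l},P_{i,k}\rangle$, with $\delta^{(l)}(x-a):f\mapsto(-1)^lf^{(l)}(a)$. Linear independence: $\sum_{j,m}(\beta^{(j)}_m)_xX^{(j)}_m=0\Rightarrow$ all $X^{(j)}_m=0_p$, and $\sum_{j,m}Y^{(j)}_m(\beta^{(j)}_m)_x=0\Rightarrow$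 all $Y^{(j)}_m=0_p$ ($X,Y\in\mathbb C^{p\times p}$). $\mathbb I=(x-x_1)^{\kappa^{(1)}}\cdots(x-x_q)^{\kappa^{(q)}}\mathbb C^{p\times p}[x]$, $\tilde{\mathbb I}=(x-\tilde x_1)^{\tilde\kappa^{(1)}}\cdots(x-\tilde x_{\tilde q})^{\tilde\kappa^{(\tilde q)}}\mathbb C^{p\times p}[x]$; $S^{\perp^R_u}=\{Q:\langle P(x),Q(y)\rangle_u=0\ \forall P\in S\}$, $S^{\perp^L_u}=\{Q:\langle Q(x),P(y)\rangle_u=0\ \forall P\in S\}$. Matrices (index pairs ordered lexicographically): $\beta\in\mathbb C^{\tilde Np\times Np}$ with block in row $(b,l)$, $0\le l\le\tilde\kappa^{(b)}-1$, and column $(j,m)$, $0\le m\le\kappa^{(j)}-1$, equal to $\beta^{(b,j)}_{l,m}$. $\mathcal J_f\in\mathbb C^{p\times Np}$: block row with $(j,m)$ block $f^{(m)}(x_j)/m!$. $\tilde{\mathcal J}_f\in\mathbb C^{p\times\tilde Np}$: block row with $(b,l)$ block $f^{(l)}(\tilde x_b)/l!$. For a kernel $K$: $\mathcal J^{[0,1]}_K(x)\in\mathbb C^{Np\times p}$ block column with $(j,m)$ block $\frac1{m!}\partial_y^mK(x,y)|_{y=x_j}$; $\tilde{\mathcal J}^{[1,0]}_K(y)\in\mathbb C^{p\times\tilde Np}$ block row with $(b,l)$ block $\frac1{l!}\partial_x^lK(x,y)|_{x=\tilde x_b}$; $\tilde{\mathcal J}_K\in\mathbb C^{Np\times\tilde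 Np}$ with block in row $(j,m)$, column $(b,l)$ equal to $\frac1{l!\,m!}\partial_x^l\partial_y^mK(x,y)|_{x=\tilde x_b,y=x_j}$. *)

From mathcomp Require Import all_boot all_algebra.
From mathcomp Require Import complex reals.
Set Implicit Arguments.
Unset Strict Implicit.
Unset Printing Implicit Defensive.
Import GRing.Theory Num.Theory.
Local Open Scope ring_scope.

Definition toC (R : realType) (r : R) : R[i] := Complex r 0.

Section Defs.
Variable C : fieldType.
Variable p : nat.

(* matrix polynomials P(x) = (P_{i,k}(x)) are elements of 'M[{poly C}]_p *)

(* the bilinear form <P(x),Q(y)>_w of a p x p matrix of generalized kernels
   w_{x,y}, given by its moments  G a b k l = < (w_{x,y})_{k,l}, x^a y^b >,
   i.e.  (<P,Q>_w)_{i,j} = sum_{k,l} < (w)_{k,l}, P_{i,k}(x) Q_{j,l}(y) >  *)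
Definition formU (G : nat -> nat -> 'M[C]_p) (P Q : 'M[{poly C}]_p) : 'M[C]_p :=
  \matrix_(i, j) \sum_(k < p) \sum_(l < p)
     \sum_(a < size (P i k)) \sum_(b < size (Q j l))
        (P i k)`_a * G a b k l * (Q j l)`_b.

Definition mderiv_at (l : nat) (f : 'M[{poly C}]_p) (c : C) : 'M[C]_p :=
  map_mx (fun e => (e^`(l)).[c]) f.

Definition formV (q qt : nat) (x : 'I_q -> C) (k : 'I_q -> nat)
    (xt : 'I_qt -> C) (kt : 'I_qt -> nat)
    (beta : 'I_qt -> 'I_q -> nat -> nat -> 'M[C]_p)
    (P Q : 'M[{poly C}]_p) : 'M[C]_p :=
  \sum_(b < qt) \sum_(l < kt b) \sum_(j < q) \sum_(m < k j)
     (((l`!)%:R)^-1 * ((m`!)%:R)^-1) *: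
       (mderiv_at l P (xt b) *m beta b j l m *m (mderiv_at m Q (x j))^T).

Definition moment (B : 'M[{poly C}]_p -> 'M[{poly C}]_p -> 'M[C]_p)
  (a b : nat) : 'M[C]_p := B ('X^a)%:M ('X^b)%:M.

Definition quasidefinite (B : 'M[{poly C}]_p -> 'M[{poly C}]_p -> 'M[C]_p)
  : Prop :=
  forall n : nat, \det (\mxblock_(a < n, b < n) moment B a b) != 0.

(* G = S1^{-1} H S2^{-T} with S1, S2 block lower unitriangular and
   H = diag(H_n), written equivalently (all products are finite sums) as
   S1 G S2^T = H. *)
Definition gauss_factorization (M : nat -> nat -> 'M[C]_p)
  (S1 S2 : nat -> nat -> 'M[C]_p) (H : nat -> 'M[C]_p) : Prop :=
  [/\ forall n, S1 n n = 1%:M /\ S2 n n = 1%:M,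
      forall n m, (n < m)%N -> S1 n m = 0 /\ S2 n m = 0 &
      forall n m, \sum_(a < n.+1) \sum_(b < m.+1)
                     S1 n a *m M a b *m (S2 m b)^T
                  = if n == m then H n else 0 ].

Definition polOf (S : nat -> nat -> 'M[C]_p) (n : nat) : 'M[{poly C}]_p :=
  \sum_(j < n.+1) ('X^j *: map_mx polyC (S n j)).

(* Bivariate matrix polynomials K(x,y) : 'M[{poly {poly C}}]_p, where the
   inner variable is x and the outer variable is y. *)
Definition liftX (P : 'M[{poly C}]_p) : 'M[{poly {poly C}}]_p :=
  map_mx polyC P.
Definition liftY (P : 'M[{poly C}]_p) : 'M[{poly {poly C}}]_p :=
  map_mx (map_poly polyC) P.

Definition kernelK (S1 S2 : nat -> nat -> 'M[C]_p) (H : nat -> 'M[C]_p)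
  (n : nat) : 'M[{poly {poly C}}]_p :=
  \sum_(j < n.+1) ((liftY (polOf S2 j))^T
                   *m map_mx (fun c => c%:P%:P) (invmx (H j))
                   *m liftX (polOf S1 j)).

Section Jets.
Variables (q : nat) (pts : 'I_q -> C) (mult : 'I_q -> nat).

Definition jetRow (f : 'M[{poly C}]_p) :
    'M[C]_(p, \sum_(j < q) \sum_(m < mult j) p) :=
  \mxrow_(j < q) \mxrow_(m < mult j)
     (((m`!)%:R)^-1 *: mderiv_at m f (pts j)).

(* J^{[0,1]}_K(x) : block column with (j,m) block
   1/m! d_y^m K(x,y) |_{y = x_j}  (a matrix polynomial in x) *)
Definition jet01 (K : 'M[{poly {poly C}}]_p) :
    'M[{poly C}]_(\sum_(j < q) \sum_(m < mult j) p, p) :=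
  \mxcol_(j < q) \mxcol_(m < mult j)
     map_mx (fun e => ((m`!)%:R)^-1 *: (e^`(m)).[(pts j)%:P]) K.

(* J^{[1,0]}_K(y) : block row with (b,l) block
   1/l! d_x^l K(x,y) |_{x = xt_b}  (a matrix polynomial in y) *)
Definition jet10 (K : 'M[{poly {poly C}}]_p) :
    'M[{poly C}]_(p, \sum_(j < q) \sum_(m < mult j) p) :=
  \mxrow_(j < q) \mxrow_(m < mult j)
     map_mx (fun e => ((m`!)%:R)^-1 *:
                        map_poly (fun c : {poly C} => (c^`(m)).[pts j]) e) K.

End Jets.

(* Jt_K : block (j,m),(b,l) equal to
   1/(l! m!) d_x^l d_y^m K(x,y) |_{x = xt_b, y = x_j} *)
Definition jetK (q qt : nat) (x : 'I_q -> C) (k : 'I_q -> nat)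
    (xt : 'I_qt -> C) (kt : 'I_qt -> nat) (K : 'M[{poly {poly C}}]_p) :
    'M[C]_(\sum_(j < q) \sum_(m < k j) p, \sum_(b < qt) \sum_(l < kt b) p) :=
  \mxblock_(j < q, b < qt) \mxblock_(m < k j, l < kt b)
     map_mx (fun e => ((l`!)%:R)^-1 * ((m`!)%:R)^-1 *
          horner ((map_poly (fun c : {poly C} => c^`(l)) (e^`(m))).[(x j)%:P])
                 (xt b))
       K.

Definition betaMx (q qt : nat) (k : 'I_q -> nat) (kt : 'I_qt -> nat)
    (beta : 'I_qt -> 'I_q -> nat -> nat -> 'M[C]_p) :
    'M[C]_(\sum_(b < qt) \sum_(l < kt b) p, \sum_(j < q) \sum_(m < k j) p) :=
  \mxblock_(b < qt, j < q) \mxblock_(l < kt b, m < k j) beta b j l m.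

Definition deltaD (l : nat) (a : C) (f : {poly C}) : C :=
  (-1) ^+ l * (f^`(l)).[a].

Definition betaFun (q qt : nat) (xt : 'I_qt -> C) (kt : 'I_qt -> nat)
    (beta : 'I_qt -> 'I_q -> nat -> nat -> 'M[C]_p) (j : 'I_q) (m : nat)
    (f : {poly C}) : 'M[C]_p :=
  \sum_(b < qt) \sum_(l < kt b)
     (((-1) ^+ l / (l`!)%:R) * deltaD l (xt b) f) *: beta b j l m.

(* linear independence of the matrix functionals (beta^{(j)}_m)_x, on the
   right and on the left.  A matrix of functionals is zero iff it vanishes
   on every polynomial. *)
Definition beta_lin_indep (q qt : nat) (k : 'I_q -> nat)
    (xt : 'I_qt -> C) (kt : 'I_qt -> nat)
    (beta : 'I_qt -> 'I_q -> nat -> nat -> 'M[C]_p) : Prop :=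
  (forall X : 'I_q -> nat -> 'M[C]_p,
     (forall f : {poly C},
        \sum_(j < q) \sum_(m < k j) (betaFun xt kt beta j m f *m X j m) = 0) ->
     forall (j : 'I_q) (m : nat), (m < k j)%N -> X j m = 0)
  /\
  (forall Y : 'I_q -> nat -> 'M[C]_p,
     (forall f : {poly C},
        \sum_(j < q) \sum_(m < k j) (Y j m *m betaFun xt kt beta j m f) = 0) ->
     forall (j : 'I_q) (m : nat), (m < k j)%N -> Y j m = 0).

Definition nodePoly (q : nat) (pts : 'I_q -> C) (mult : 'I_q -> nat)
  : {poly C} := \prod_(j < q) ('X - (pts j)%:P) ^+ mult j.

Definition in_ideal (q : nat) (pts : 'I_q -> C) (mult : 'I_q -> nat)
  (P : 'M[{poly C}]_p) : Prop :=
  exists Rm : 'M[{poly C}]_p, P = nodePoly pts mult *: Rm.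

Definition perpR_trivial (B : 'M[{poly C}]_p -> 'M[{poly C}]_p -> 'M[C]_p)
  (S : 'M[{poly C}]_p -> Prop) : Prop :=
  forall Q, (forall P, S P -> B P Q = 0) -> Q = 0.

Definition perpL_trivial (B : 'M[{poly C}]_p -> 'M[{poly C}]_p -> 'M[C]_p)
  (S : 'M[{poly C}]_p -> Prop) : Prop :=
  forall Q, (forall P, S P -> B Q P = 0) -> Q = 0.

End Defs.

From mathcomp Require Import all_boot all_algebra.
From mathcomp Require Import complex reals.
From mathcomp Require Import ring.
Set Implicit Arguments.
Unset Strict Implicit.
Unset Printing Implicit Defensive.
Import GRing.Theory Num.Theory.
Local Open Scope ring_scope.

(* Write J_t, J for the jet maps at the nodes xt_b and x_j, so that
   uh(P, Q) = u(P, Q) + J_t(P) beta J(Q)^T.  The u-kernel K_{n-1} reproduces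
   u-pairings against polynomials of degree < n, hence
   P1_n - J_t(P1_n) (I + beta Jt_K)^{-1} beta J^{[0,1]}_K(x) is a monic
   polynomial of degree n that is uh-orthogonal to P2_0, ..., P2_{n-1}; by
   quasidefiniteness of uh it is hat P1_n.  The same reproducing argument
   turns a row r with r (I + beta Jt_K) = 0 into a polynomial of degree < n
   that is uh-orthogonal to all lower degrees, hence zero, which forces r = 0.
   hat H_n is read off from uh(hat P1_n, x^n), and hat P2_n follows by applying
   all this to the transposed forms (P, Q) |-> u(Q, P)^T. *)

Lemma unitmx_rowker (C : fieldType) m (A : 'M[C]_m) :
  (forall r : 'rV_m, r *m A = 0 -> r = 0) -> A \in unitmx.
Proof.
move=> hA; rewrite -row_free_unit -kermx_eq0; apply/eqP/row_matrixP => i.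
by rewrite row0; apply: hA; rewrite -row_mul mulmx_ker row0.
Qed.

Lemma unitmx_blockker (C : fieldType) p m (A : 'M[C]_m) : (0 < p)%N ->
  (forall r : 'M_(p, m), r *m A = 0 -> r = 0) -> A \in unitmx.
Proof.
move=> p_gt0 hA; apply: unitmx_rowker => r rA0.
have := hA (const_mx 1 *m r); rewrite -mulmxA rA0 mulmx0 => /(_ erefl).
have one1 : const_mx 1 = 1%:M :> 'M[C]_1.
  by apply/matrixP => i j; rewrite !mxE !ord1.
move/(congr1 (row (Ordinal p_gt0))).
by rewrite row_mul row_const one1 mul1mx row0.
Qed.

Lemma push_through_invmx (C : fieldType) m n
    (A : 'M[C]_(m, n)) (B : 'M_(n, m)) :
  1%:M + A *m B \in unitmx -> 1%:M + B *m A \in unitmx ->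
  invmx (1%:M + A *m B) *m A = A *m invmx (1%:M + B *m A).
Proof.
move=> unitAB unitBA.
have AB_A : (1%:M + A *m B) *m A = A *m (1%:M + B *m A).
  by rewrite mulmxDl mulmxDr mul1mx mulmx1 mulmxA.
apply: (canRL (mulmxK unitBA)); rewrite -mulmxA -AB_A mulmxA.
by rewrite mulVmx ?mul1mx.
Qed.

Lemma big_additive (V W : zmodType) (f : V -> W) :
  {morph f : a b / a + b} ->
  forall (I : Type) (r : seq I) (P : pred I) (F : I -> V),
  f (\sum_(i <- r | P i) F i) = \sum_(i <- r | P i) f (F i).
Proof.
move=> fD; have f0 : f 0 = 0 by apply: (addIr (f 0)); rewrite -fD !add0r.
exact: big_morph fD f0.
Qed.

Section MatrixForms.
Variables (C : fieldType) (p : nat).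
Local Notation cM := (map_mx (@polyC C)).
Local Notation PM := ('M[{poly C}]_p).
Local Notation form := (PM -> PM -> 'M[C]_p).

Definition mxmono (a : nat) (D : 'M[C]_p) : PM := 'X^a *: cM D.

Lemma mxmonoE a D : mxmono a D = cM D *m ('X^a)%:M.
Proof. by rewrite /mxmono mul_mx_scalar. Qed.

Lemma mul_mxmono A a D : cM A *m mxmono a D = mxmono a (A *m D).
Proof. by rewrite /mxmono -scalemxAr map_mxM. Qed.

Lemma mxmono1 a : mxmono a 1%:M = ('X^a)%:M.
Proof. by rewrite mxmonoE map_mx1 mul1mx. Qed.

Lemma mxmono0 a : mxmono a 0 = 0.
Proof. by rewrite /mxmono map_mx0 scaler0. Qed.

Lemma mxmonoD a D E : mxmono a (D + E) = mxmono a D + mxmono a E.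
Proof. by rewrite /mxmono map_mxD scalerDr. Qed.

Lemma polOf_monic S n : S n n = 1%:M ->
  polOf S n = ('X^n)%:M + \sum_(c < n) mxmono c (S n c).
Proof. by move=> Snn; rewrite /polOf big_ord_recr /= Snn -mxmono1 addrC. Qed.

Definition mxbilinear (B : form) :=
  [/\ forall P P' Q, B (P + P') Q = B P Q + B P' Q,
      forall P Q Q', B P (Q + Q') = B P Q + B P Q',
      forall A P Q, B (cM A *m P) Q = A *m B P Q &
      forall A P Q, B P (cM A *m Q) = B P Q *m A^T].

Section Bilinear.
Variable B : form.
Hypothesis hB : mxbilinear B.

Lemma bilinDl P P' Q : B (P + P') Q = B P Q + B P' Q.
Proof. by case: hB. Qed.
Lemma bilinDr P Q Q' : B P (Q + Q') = B P Q + B P Q'.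
Proof. by case: hB. Qed.
Lemma bilinMl A P Q : B (cM A *m P) Q = A *m B P Q.
Proof. by case: hB. Qed.
Lemma bilinMr A P Q : B P (cM A *m Q) = B P Q *m A^T.
Proof. by case: hB. Qed.

Lemma bilinBl P P' Q : B (P - P') Q = B P Q - B P' Q.
Proof. by apply: (addIr (B P' Q)); rewrite -bilinDl !subrK. Qed.

Lemma bilin_suml (I : Type) (r : seq I) (P : pred I) F Q :
  B (\sum_(i <- r | P i) F i) Q = \sum_(i <- r | P i) B (F i) Q.
Proof. exact: big_additive (fun P P' => bilinDl P P' Q) _ _ _ _. Qed.
Lemma bilin_sumr (I : Type) (r : seq I) (P : pred I) F Q :
  B Q (\sum_(i <- r | P i) F i) = \sum_(i <- r | P i) B Q (F i).
Proof. exact: big_additive (bilinDr Q) _ _ _ _. Qed.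

Lemma bilin_mxmono a D b E :
  B (mxmono a D) (mxmono b E) = D *m moment B a b *m E^T.
Proof. by rewrite !mxmonoE bilinMl bilinMr mulmxA. Qed.

Lemma bilin_mxmonoX a D b : B (mxmono a D) ('X^b)%:M = D *m moment B a b.
Proof. by rewrite -mxmono1 bilin_mxmono trmx1 mulmx1. Qed.

Lemma gauss_biorth S1 S2 H : gauss_factorization (moment B) S1 S2 H ->
  forall n m, B (polOf S1 n) (polOf S2 m) = if n == m then H n else 0.
Proof.
case=> _ _ SGS n m; rewrite -SGS bilin_suml; apply: eq_bigr => a _.
by rewrite bilin_sumr; apply: eq_bigr => b _; rewrite bilin_mxmono.
Qed.

Lemma orthX_of_orth_polOf S n Q : (forall i, S i i = 1%:M) ->
  (forall i, (i < n)%N -> B Q (polOf S i) = 0) ->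
  forall b, (b < n)%N -> B Q ('X^b)%:M = 0.
Proof.
move=> Sii QS; elim/ltn_ind => b IH b_lt_n.
have := QS b b_lt_n; rewrite polOf_monic // bilinDr bilin_sumr big1 ?addr0 //.
move=> [c c_lt_b] _; rewrite mxmonoE bilinMr IH ?mul0mx //=.
exact: ltn_trans b_lt_n.
Qed.

Lemma bilin_polOf_lead S n Q : S n n = 1%:M ->
  (forall b, (b < n)%N -> B Q ('X^b)%:M = 0) ->
  B Q (polOf S n) = B Q ('X^n)%:M.
Proof.
move=> Snn QX; rewrite polOf_monic // bilinDr bilin_sumr big1 ?addr0 //.
by move=> [c c_lt_n] _; rewrite mxmonoE bilinMr QX ?mul0mx.
Qed.

End Bilinear.

Definition deg_lt n (P : PM) :=
  exists D : nat -> 'M[C]_p, P = \sum_(a < n) mxmono a (D a).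

Lemma deg_lt0 n : deg_lt n 0.
Proof. by exists (fun=> 0); rewrite big1 // => a _; rewrite mxmono0. Qed.

Lemma deg_ltD n P Q : deg_lt n P -> deg_lt n Q -> deg_lt n (P + Q).
Proof.
move=> [D ->] [E ->]; exists (fun a => D a + E a).
by rewrite -big_split; apply: eq_bigr => a _; rewrite mxmonoD.
Qed.

Lemma deg_ltM n A P : deg_lt n P -> deg_lt n (cM A *m P).
Proof.
move=> [D ->]; exists (fun a => A *m D a); rewrite mulmx_sumr.
by apply: eq_bigr => a _; rewrite mul_mxmono.
Qed.

Lemma deg_ltB n P Q : deg_lt n P -> deg_lt n Q -> deg_lt n (P - Q).
Proof.
move=> dP /(deg_ltM (- 1%:M)); rewrite map_mxN map_mx1 mulNmx mul1mx.
exact: deg_ltD.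
Qed.

Lemma deg_lt_sum n (I : Type) (r : seq I) (P : pred I) F :
  (forall i, P i -> deg_lt n (F i)) -> deg_lt n (\sum_(i <- r | P i) F i).
Proof.
move=> dF; elim/big_rec: _ => [|i Q Pi dQ]; first exact: deg_lt0.
exact: deg_ltD (dF i Pi) dQ.
Qed.

Lemma deg_lt_mxmono n a D : (a < n)%N -> deg_lt n (mxmono a D).
Proof.
move=> a_lt_n; exists (fun b => if b == a then D else 0).
rewrite (bigD1 (Ordinal a_lt_n)) //= eqxx big1 ?addr0 // => b.
by rewrite -val_eqE /= => /negbTE ->; rewrite mxmono0.
Qed.

Lemma deg_lt_polOf n S j : (j < n)%N -> deg_lt n (polOf S j).
Proof.
move=> j_lt_n; apply: deg_lt_sum => a _; apply: deg_lt_mxmono.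
exact: leq_ltn_trans (ltnSE (ltn_ord a)) j_lt_n.
Qed.

Lemma deg_lt_polOf_lead n S : S n n = 1%:M ->
  deg_lt n (polOf S n - ('X^n)%:M).
Proof.
move=> Snn; rewrite polOf_monic // addrC addKr.
by apply: deg_lt_sum => a _; apply: deg_lt_mxmono.
Qed.

Lemma deg_lt_polOfB n S S' : S n n = 1%:M -> S' n n = 1%:M ->
  deg_lt n (polOf S n - polOf S' n).
Proof.
move=> Snn S'nn.
have -> : polOf S n - polOf S' n
    = (polOf S n - ('X^n)%:M) - (polOf S' n - ('X^n)%:M).
  by rewrite [in RHS]opprB [RHS]addrA subrK.
by apply: deg_ltB; apply: deg_lt_polOf_lead.
Qed.

Section Quasidefinite.
Variable B : form.
Hypothesis hB : mxbilinear B.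
Hypothesis qB : quasidefinite B.

Lemma quasidefinite_orthX_coef0 n (D : nat -> 'M[C]_p) :
  (forall b, (b < n)%N -> B (\sum_(a < n) mxmono a (D a)) ('X^b)%:M = 0) ->
  forall a : 'I_n, D a = 0.
Proof.
move=> PX a.
pose Dn : 'M_(p, \sum_(a < n) p) := \mxrow_(a < n) D a.
have unit_moments : \mxblock_(a < n, b < n) moment B a b \in unitmx.
  by rewrite unitmxE unitfE; apply: qB.
have : Dn *m \mxblock_(a < n, b < n) moment B a b = 0.
  rewrite mul_mxrow_mxblock -(mxrow0 (q_ := fun=> p)); apply: eq_mxrow => b.
  rewrite -[RHS](PX b (ltn_ord b)) bilin_suml //.
  by apply: eq_bigr => c _; rewrite bilin_mxmonoX.
move/(canRL (mulmxK unit_moments)); rewrite mul0mx.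
by move/(congr1 (fun M => submxrow M a)); rewrite mxrowK submxrow0.
Qed.

Lemma quasidefinite_orthX_eq0 n P : deg_lt n P ->
  (forall b, (b < n)%N -> B P ('X^b)%:M = 0) -> P = 0.
Proof.
move=> [D ->] /quasidefinite_orthX_coef0 D0.
by apply: big1 => a _; rewrite D0 mxmono0.
Qed.

Lemma quasidefinite_gauss_unit S1 S2 H : (0 < p)%N ->
  gauss_factorization (moment B) S1 S2 H -> forall i, H i \in unitmx.
Proof.
move=> p_gt0 gB i; have [Sdiag _ _] := gB.
apply: (unitmx_blockker p_gt0) => r rH0.
have QS j : (j < i.+1)%N -> B (cM r *m polOf S1 i) (polOf S2 j) = 0.
  move=> _; rewrite bilinMl // (gauss_biorth hB gB).
  by case: eqP; rewrite ?rH0 ?mulmx0.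
have S2diag j : S2 j j = 1%:M by case: (Sdiag j).
have rS1 : cM r *m polOf S1 i = \sum_(a < i.+1) mxmono a (r *m S1 i a).
  by rewrite mulmx_sumr; apply: eq_bigr => a _; rewrite -mul_mxmono.
have := orthX_of_orth_polOf hB S2diag QS; rewrite rS1.
move/(@quasidefinite_orthX_coef0 _ (fun a => r *m S1 i a))/(_ ord_max) => /=.
by case: (Sdiag i) => -> _; rewrite mulmx1.
Qed.

End Quasidefinite.

Definition trform (B : form) : form := fun P Q => (B Q P)^T.

Lemma mxbilinear_tr B : mxbilinear B -> mxbilinear (trform B).
Proof.
move=> hB; split=> *; rewrite /trform.
- by rewrite bilinDr // linearD.
- by rewrite bilinDl // linearD.
- by rewrite bilinMr // trmx_mul trmxK.
- by rewrite bilinMl // trmx_mul.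
Qed.

Lemma quasidefinite_tr B : quasidefinite B -> quasidefinite (trform B).
Proof. by move=> qB n; have := qB n; rewrite -det_tr tr_mxblock. Qed.

Lemma gauss_factorization_tr B S1 S2 H :
  gauss_factorization (moment B) S1 S2 H ->
  gauss_factorization (moment (trform B)) S2 S1 (fun n => (H n)^T).
Proof.
case=> Sdiag Supp SGS; split=> [n|n m /Supp []|n m] //.
  by case: (Sdiag n).
have -> : (if n == m then (H n)^T else 0) = (if m == n then H m else 0)^T.
  by rewrite eq_sym; case: eqP => [->|]; rewrite ?trmx0.
rewrite -SGS linear_sum exchange_big.
apply: eq_bigr => a _; rewrite linear_sum; apply: eq_bigr => b _.
by rewrite /= !trmx_mul trmxK mulmxA.
Qed.

End MatrixForms.

Section FormU.
Variable C : fieldType.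

Definition coef_pair (c : nat -> C) (f : {poly C}) : C :=
  \sum_(a < size f) c a * f`_a.

Lemma coef_pair_widen c (f : {poly C}) d : (size f <= d)%N ->
  coef_pair c f = \sum_(a < d) c a * f`_a.
Proof.
move=> le_fd; rewrite /coef_pair (big_ord_widen d (fun a => c a * f`_a) le_fd).
rewrite big_mkcond; apply: eq_bigr => a _.
by case: ltnP => // /(nth_default 0) ->; rewrite mulr0.
Qed.

Lemma coef_pairD c f g : coef_pair c (f + g) = coef_pair c f + coef_pair c g.
Proof.
have le_fg : (size (f + g)%R <= size f + size g)%N.
  by rewrite (leq_trans (size_polyD f g)) // geq_max leq_addr leq_addl.
rewrite !(@coef_pair_widen c _ (size f + size g)) ?leq_addr ?leq_addl //.
by rewrite -big_split; apply: eq_bigr => a _; rewrite coefD mulrDr.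
Qed.

Lemma coef_pairZ c a f : coef_pair c (a *: f) = a * coef_pair c f.
Proof.
rewrite !(@coef_pair_widen c _ (size f)) ?size_scale_leq // mulr_sumr.
by apply: eq_bigr => b _; rewrite coefZ mulrCA.
Qed.

Lemma coef_pair_sum c (I : Type) (r : seq I) (P : pred I) F :
  coef_pair c (\sum_(i <- r | P i) F i) = \sum_(i <- r | P i) coef_pair c (F i).
Proof. exact: big_additive (coef_pairD c) _ _ _ _. Qed.

Variable p : nat.
Local Notation cM := (map_mx (@polyC C)).
Implicit Types (G : nat -> nat -> 'M[C]_p) (P Q : 'M[{poly C}]_p).

Lemma formU_entryl G P Q i j : formU G P Q i j =
  \sum_k \sum_l
    coef_pair (fun a => coef_pair (fun b => G a b k l) (Q j l)) (P i k).
Proof.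
rewrite mxE; apply: eq_bigr => k _; apply: eq_bigr => l _.
apply: eq_bigr => a _; rewrite mulr_suml; apply: eq_bigr => b _; ring.
Qed.

Lemma formU_entryr G P Q i j : formU G P Q i j =
  \sum_k \sum_l
    coef_pair (fun b => coef_pair (fun a => G a b k l) (P i k)) (Q j l).
Proof.
rewrite mxE; apply: eq_bigr => k _; apply: eq_bigr => l _.
rewrite exchange_big; apply: eq_bigr => b _; rewrite mulr_suml.
by apply: eq_bigr => a _; ring.
Qed.

Lemma mul_polyC_mxE (A : 'M[C]_p) P i k :
  (cM A *m P) i k = \sum_k' A i k' *: P k' k.
Proof. by rewrite mxE; apply: eq_bigr => k' _; rewrite mxE mul_polyC. Qed.

Lemma mxbilinear_formU G : mxbilinear (formU G).
Proof.
split=> [P P' Q|P Q Q'|A P Q|A P Q]; apply/matrixP => i j.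
- rewrite [RHS]mxE !formU_entryl -big_split; apply: eq_bigr => k _.
  by rewrite -big_split; apply: eq_bigr => l _; rewrite mxE coef_pairD.
- rewrite [RHS]mxE !formU_entryr -big_split; apply: eq_bigr => k _.
  by rewrite -big_split; apply: eq_bigr => l _; rewrite mxE coef_pairD.
- rewrite formU_entryl mxE.
  under [RHS]eq_bigr => k' _ do rewrite formU_entryl mulr_sumr.
  rewrite [RHS]exchange_big; apply: eq_bigr => k _.
  under [RHS]eq_bigr => k' _ do rewrite mulr_sumr.
  rewrite [RHS]exchange_big; apply: eq_bigr => l _.
  rewrite mul_polyC_mxE coef_pair_sum.
  by apply: eq_bigr => k' _; rewrite coef_pairZ.
- rewrite formU_entryr mxE.
  under [RHS]eq_bigr => l' _ do rewrite formU_entryr mulr_suml.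
  rewrite [RHS]exchange_big; apply: eq_bigr => k _.
  under [RHS]eq_bigr => l' _ do rewrite mulr_suml.
  rewrite [RHS]exchange_big; apply: eq_bigr => l _.
  rewrite mul_polyC_mxE coef_pair_sum; apply: eq_bigr => l' _.
  by rewrite coef_pairZ mxE mulrC.
Qed.

End FormU.

Section KernelJets.
Variables (C : fieldType) (p N1 N2 : nat).
Local Notation cM := (map_mx (@polyC C)).
Local Notation PM := ('M[{poly C}]_p).
Variables (J1 : PM -> 'M[C]_(p, N1)) (J2 : PM -> 'M[C]_(p, N2)).
Variables (S1 S2 : nat -> nat -> 'M[C]_p) (H : nat -> 'M[C]_p) (N : nat).

(* With J1, J2 the jets at xt_b and x_j, these are J^{[0,1]}_{K_N} and
   Jt_{K_N}. *)
Definition kernel_jet : 'M[{poly C}]_(N2, p) :=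
  \sum_(j < N.+1) cM ((J2 (polOf S2 j))^T *m invmx (H j)) *m polOf S1 j.

Definition kernel_jet2 : 'M[C]_(N2, N1) :=
  \sum_(j < N.+1) (J2 (polOf S2 j))^T *m invmx (H j) *m J1 (polOf S1 j).

End KernelJets.

Lemma tr_kernel_jet2 (C : fieldType) p N1 N2
    (J1 : 'M[{poly C}]_p -> 'M[C]_(p, N1))
    (J2 : 'M[{poly C}]_p -> 'M[C]_(p, N2)) S1 S2 (H : nat -> 'M[C]_p) N :
  (kernel_jet2 J1 J2 S1 S2 H N)^T
  = kernel_jet2 J2 J1 S2 S1 (fun n => (H n)^T) N.
Proof.
rewrite linear_sum; apply: eq_bigr => j _ /=.
by rewrite !trmx_mul trmxK trmx_inv mulmxA.
Qed.

Lemma trform_perturbed (C : fieldType) p N1 N2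
    (u uh : 'M[{poly C}]_p -> 'M[{poly C}]_p -> 'M[C]_p)
    (J1 : 'M[{poly C}]_p -> 'M[C]_(p, N1))
    (J2 : 'M[{poly C}]_p -> 'M[C]_(p, N2)) (beta : 'M[C]_(N1, N2)) :
  (forall P Q, uh P Q = u P Q + J1 P *m beta *m (J2 Q)^T) ->
  forall P Q, trform uh P Q = trform u P Q + J2 P *m beta^T *m (J1 Q)^T.
Proof.
by move=> uhE P Q; rewrite /trform uhE linearD /= !trmx_mul trmxK mulmxA.
Qed.

Section Perturbation.
Variables (C : fieldType) (p N1 N2 : nat).
Local Notation cM := (map_mx (@polyC C)).
Local Notation PM := ('M[{poly C}]_p).
Variables (u uh : PM -> PM -> 'M[C]_p).
Variables (J1 : PM -> 'M[C]_(p, N1)) (J2 : PM -> 'M[C]_(p, N2)).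
Variable beta : 'M[C]_(N1, N2).
Hypothesis p_gt0 : (0 < p)%N.
Hypothesis u_bilin : mxbilinear u.
Hypothesis J1D : forall P Q, J1 (P + Q) = J1 P + J1 Q.
Hypothesis J1M : forall A P, J1 (cM A *m P) = A *m J1 P.
Hypothesis J2D : forall P Q, J2 (P + Q) = J2 P + J2 Q.
Hypothesis J2M : forall A P, J2 (cM A *m P) = A *m J2 P.
Hypothesis uhE : forall P Q, uh P Q = u P Q + J1 P *m beta *m (J2 Q)^T.
Hypothesis u_qd : quasidefinite u.
Hypothesis uh_qd : quasidefinite uh.
Variables (S1 S2 : nat -> nat -> 'M[C]_p) (H : nat -> 'M[C]_p).
Variables (S1h S2h : nat -> nat -> 'M[C]_p) (Hh : nat -> 'M[C]_p).
Hypothesis u_gauss : gauss_factorization (moment u) S1 S2 H.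
Hypothesis uh_gauss : gauss_factorization (moment uh) S1h S2h Hh.
Variable N : nat.

Local Notation Kx := (kernel_jet J2 S1 S2 H N).
Local Notation JK := (kernel_jet2 J1 J2 S1 S2 H N).

Lemma J1_0 : J1 0 = 0.
Proof. by have := J1M 0 0; rewrite map_mx0 !mul0mx. Qed.

Lemma J1B P Q : J1 (P - Q) = J1 P - J1 Q.
Proof. by apply: (addIr (J1 Q)); rewrite -J1D !subrK. Qed.

Lemma mxbilinear_perturbed : mxbilinear uh.
Proof.
split=> *; rewrite !uhE.
- by rewrite bilinDl // J1D !mulmxDl addrACA.
- by rewrite bilinDr // J2D linearD /= !mulmxDr addrACA.
- by rewrite bilinMl // J1M mulmxDr !mulmxA.
- by rewrite bilinMr // J2M trmx_mul mulmxDl !mulmxA.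
Qed.

Let S1diag i : S1 i i = 1%:M. Proof. by case: u_gauss => /(_ i) []. Qed.
Let S2diag i : S2 i i = 1%:M. Proof. by case: u_gauss => /(_ i) []. Qed.
Let S1hdiag i : S1h i i = 1%:M. Proof. by case: uh_gauss => /(_ i) []. Qed.
Let S2hdiag i : S2h i i = 1%:M. Proof. by case: uh_gauss => /(_ i) []. Qed.

Lemma J1_kernel_jet A : J1 (cM A *m Kx) = A *m JK.
Proof.
rewrite mulmx_sumr (big_additive J1D) mulmx_sumr.
by apply: eq_bigr => j _; rewrite mulmxA -map_mxM J1M !mulmxA.
Qed.

Lemma kernel_jet_reproducing A i :
  u (cM A *m Kx) (polOf S2 i) =
  if (i < N.+1)%N then A *m (J2 (polOf S2 i))^T else 0.
Proof.
rewrite mulmx_sumr bilin_suml //.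
under eq_bigr => j _ do
  rewrite mulmxA -map_mxM bilinMl // (gauss_biorth u_bilin u_gauss).
case: ifP => [i_le_N | /negbT i_gt_N].
  have unitH := quasidefinite_gauss_unit u_bilin u_qd p_gt0 u_gauss.
  rewrite (bigD1 (Ordinal i_le_N)) //= eqxx big1 ?addr0.
    by rewrite -!mulmxA mulVmx ?mulmx1.
  by move=> j; rewrite -val_eqE /= => /negbTE ->; rewrite mulmx0.
apply: big1 => j _; case: eqP => [j_eq_i|_]; last by rewrite mulmx0.
by move: i_gt_N (ltn_ord j); rewrite j_eq_i => /negP.
Qed.

Lemma deg_lt_kernel_jet A : deg_lt N.+1 (cM A *m Kx).
Proof.
rewrite mulmx_sumr; apply: deg_lt_sum => j _.
by rewrite mulmxA -map_mxM; apply/deg_ltM/deg_lt_polOf.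
Qed.

Lemma perturbed_unit : 1%:M + beta *m JK \in unitmx.
Proof.
apply: (unitmx_blockker p_gt0) => r r0.
have rJK : r *m beta *m JK = - r.
  by apply/eqP; rewrite -addr_eq0 addrC -mulmxA -{1}(mulmx1 r) -mulmxDr r0.
have Q_orth i : (i < N.+1)%N -> uh (cM (r *m beta) *m Kx) (polOf S2 i) = 0.
  move=> i_le_N; rewrite uhE kernel_jet_reproducing i_le_N J1_kernel_jet rJK.
  by rewrite !mulNmx subrr.
have := orthX_of_orth_polOf mxbilinear_perturbed S2diag Q_orth.
move/(quasidefinite_orthX_eq0 mxbilinear_perturbed uh_qd (deg_lt_kernel_jet _)).
move=> Q0.
by apply/eqP; rewrite -oppr_eq0 -rJK -J1_kernel_jet Q0 J1_0.
Qed.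

Local Notation Minv := (invmx (1%:M + beta *m JK)).

Lemma J1_perturbed :
  J1 (polOf S1 N.+1 - cM (J1 (polOf S1 N.+1) *m Minv *m beta) *m Kx)
  = J1 (polOf S1 N.+1) *m Minv.
Proof.
apply/eqP; rewrite J1B J1_kernel_jet subr_eq -!mulmxA -mulmxDr.
by rewrite -{1}[Minv]mulmx1 -mulmxDr mulVmx ?perturbed_unit ?mulmx1.
Qed.

Lemma perturbed_polOf1_orthX b :
  (b < N.+1)%N -> uh (polOf S1h N.+1) ('X^b)%:M = 0.
Proof.
apply: (orthX_of_orth_polOf mxbilinear_perturbed S2hdiag) => i i_le_N.
rewrite (gauss_biorth mxbilinear_perturbed uh_gauss) ifN //.
by rewrite neq_ltn i_le_N orbT.
Qed.

Lemma perturbed_polOf1 :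
  polOf S1h N.+1 = polOf S1 N.+1
    - cM (J1 (polOf S1 N.+1) *m Minv *m beta) *m Kx.
Proof.
set Q := _ - _.
have Q_orth i : (i < N.+1)%N -> uh Q (polOf S2 i) = 0.
  move=> i_le_N; rewrite uhE bilinBl // kernel_jet_reproducing i_le_N.
  rewrite (gauss_biorth u_bilin u_gauss) ifN ?J1_perturbed ?sub0r //.
    by rewrite addNr.
  by rewrite neq_ltn i_le_N orbT.
have deg_diff : deg_lt N.+1 (polOf S1h N.+1 - Q).
  rewrite /Q opprB addrCA addrC; apply: deg_ltD; last exact: deg_lt_kernel_jet.
  exact: deg_lt_polOfB (S1hdiag _) (S1diag _).
apply/eqP; rewrite -subr_eq0; apply/eqP.
apply: (quasidefinite_orthX_eq0 mxbilinear_perturbed uh_qd deg_diff) => b ltbN.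
rewrite bilinBl ?perturbed_polOf1_orthX //; last exact: mxbilinear_perturbed.
by rewrite (orthX_of_orth_polOf mxbilinear_perturbed S2diag Q_orth) ?subrr.
Qed.

Lemma perturbed_H : Hh N.+1 =
  H N.+1 + J1 (polOf S1 N.+1) *m Minv *m beta *m (J2 (polOf S2 N.+1))^T.
Proof.
have := gauss_biorth mxbilinear_perturbed uh_gauss N.+1 N.+1.
rewrite eqxx => <-.
have P1h_lead := bilin_polOf_lead mxbilinear_perturbed _ perturbed_polOf1_orthX.
rewrite (P1h_lead S2h) // -(P1h_lead S2) // uhE {1}perturbed_polOf1 bilinBl //.
rewrite kernel_jet_reproducing ltnn subr0 (gauss_biorth u_bilin u_gauss) eqxx.
by rewrite perturbed_polOf1 J1_perturbed.
Qed.

Lemma perturbation_formulas :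
  [/\ 1%:M + beta *m JK \in unitmx,
      polOf S1h N.+1
        = polOf S1 N.+1 - cM (J1 (polOf S1 N.+1) *m Minv *m beta) *m Kx &
      Hh N.+1
        = H N.+1
          + J1 (polOf S1 N.+1) *m Minv *m beta *m (J2 (polOf S2 N.+1))^T].
Proof.
by split; [exact: perturbed_unit|exact: perturbed_polOf1|exact: perturbed_H].
Qed.

End Perturbation.

Section Jets.
Variables (C : fieldType) (p : nat).
Local Notation cM := (map_mx (@polyC C)).
Local Notation PM := ('M[{poly C}]_p).

Lemma mderiv_atD l (P Q : PM) a :
  mderiv_at l (P + Q) a = mderiv_at l P a + mderiv_at l Q a.
Proof. by apply/matrixP => i j; rewrite !mxE derivnD hornerD. Qed.

Lemma mderiv_atM l A (P : PM) a :
  mderiv_at l (cM A *m P) a = A *m mderiv_at l P a.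
Proof.
apply/matrixP => i j; rewrite !mxE raddf_sum horner_sum.
by apply: eq_bigr => k _; rewrite !mxE /= mul_polyC derivnZ hornerZ.
Qed.

Variables (q : nat) (pts : 'I_q -> C) (mult : 'I_q -> nat).

Lemma jetRowD (P Q : PM) :
  jetRow pts mult (P + Q) = jetRow pts mult P + jetRow pts mult Q.
Proof.
rewrite /jetRow -mxrowD; apply: eq_mxrow => j; rewrite -mxrowD.
by apply: eq_mxrow => m; rewrite mderiv_atD scalerDr.
Qed.

Lemma jetRowM A (P : PM) :
  jetRow pts mult (cM A *m P) = A *m jetRow pts mult P.
Proof.
rewrite /jetRow mul_mxrow; apply: eq_mxrow => j; rewrite mul_mxrow.
by apply: eq_mxrow => m; rewrite mderiv_atM scalemxAr.
Qed.

End Jets.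

Lemma formV_jet (C : fieldType) (p q qt : nat)
    (x : 'I_q -> C) (k : 'I_q -> nat) (xt : 'I_qt -> C) (kt : 'I_qt -> nat)
    (beta : 'I_qt -> 'I_q -> nat -> nat -> 'M[C]_p) (P Q : 'M[{poly C}]_p) :
  formV x k xt kt beta P Q =
  jetRow xt kt P *m betaMx k kt beta *m (jetRow x k Q)^T.
Proof.
rewrite /jetRow /betaMx mul_mxrow_mxblock tr_mxrow mul_mxrow_mxcol.
under [RHS]eq_bigr => j _ do rewrite mulmx_suml.
rewrite [RHS]exchange_big /formV; apply: eq_bigr => b _.
rewrite exchange_big; apply: eq_bigr => j _.
rewrite mul_mxrow_mxblock tr_mxrow mul_mxrow_mxcol exchange_big.
apply: eq_bigr => l _; rewrite mulmx_suml; apply: eq_bigr => m _.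
by rewrite linearZ /= -scalemxAl -scalemxAr -scalemxAl scalerA mulrC.
Qed.

Section BivariateJets.
Variables (C : fieldType) (p : nat).
Local Notation PM := ('M[{poly C}]_p).

(* f(y) g(x): the inner variable of {poly {poly C}} is x, the outer one y *)
Definition ptensor (f g : {poly C}) : {poly {poly C}} :=
  map_poly polyC f * g%:P.

Definition kernel_term (Q : PM) (A : 'M[C]_p) (P : PM) :
    'M[{poly {poly C}}]_p :=
  (liftY Q)^T *m map_mx (fun c => c%:P%:P) A *m liftX P.

Lemma kernel_termE Q A P i l :
  kernel_term Q A P i l = \sum_k' \sum_k ptensor (Q k i) ((A k k')%:P * P k' l).
Proof.
rewrite !mxE; apply: eq_bigr => k' _; rewrite !mxE big_distrl.
by apply: eq_bigr => k _; rewrite !mxE /ptensor polyCM mulrA.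
Qed.

Lemma ptensorE f g : ptensor f g = g *: map_poly polyC f.
Proof. by rewrite /ptensor mulrC mul_polyC. Qed.

Lemma derivn_ptensor m f g : (ptensor f g)^`(m) = ptensor (f^`(m)) g.
Proof. by rewrite !ptensorE derivnZ derivn_map. Qed.

Lemma horner_ptensor f g a : (ptensor f g).[a%:P] = (f.[a])%:P * g.
Proof. by rewrite ptensorE hornerZ horner_map mulrC. Qed.

Lemma map_derivn_ptensor l f g :
  map_poly (fun c : {poly C} => c^`(l)) (ptensor f g) = ptensor f (g^`(l)).
Proof.
apply/polyP => i; rewrite coef_map_id0 ?raddf0 // /ptensor !coefMC coef_map /=.
by rewrite mul_polyC derivnZ mul_polyC.
Qed.

Lemma map_hornerx_ptensor m a f g :
  map_poly (fun c : {poly C} => (c^`(m)).[a]) (ptensor f g)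
  = f * ((g^`(m)).[a])%:P.
Proof.
apply/polyP => i; rewrite coef_map_id0 ?raddf0 ?horner0 // /ptensor !coefMC.
by rewrite coef_map /= mul_polyC derivnZ hornerZ.
Qed.

Lemma map_polyD_morph (R : nzRingType) (phi : {poly C} -> R) :
  {morph phi : a b / a + b} -> phi 0 = 0 ->
  {morph map_poly phi : e e' / e + e'}.
Proof.
move=> phiD phi0 e e'; apply/polyP => i.
by rewrite coefD !coef_map_id0 // coefD phiD.
Qed.

Definition dy_at m a (e : {poly {poly C}}) : {poly C} :=
  ((m`!)%:R)^-1 *: (e^`(m)).[a%:P].
Definition dx_at m a (e : {poly {poly C}}) : {poly C} :=
  ((m`!)%:R)^-1 *: map_poly (fun c : {poly C} => (c^`(m)).[a]) e.
Definition dxdy_at l m a b (e : {poly {poly C}}) : C :=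
  ((l`!)%:R)^-1 * ((m`!)%:R)^-1 *
    horner ((map_poly (fun c : {poly C} => c^`(l)) (e^`(m))).[a%:P]) b.

Lemma dy_atD m a : {morph dy_at m a : e e' / e + e'}.
Proof. by move=> e e'; rewrite /dy_at derivnD hornerD scalerDr. Qed.

Lemma dx_atD m a : {morph dx_at m a : e e' / e + e'}.
Proof.
move=> e e'; rewrite /dx_at map_polyD_morph ?raddf0 ?horner0 ?scalerDr //.
by move=> c c'; rewrite derivnD hornerD.
Qed.

Lemma dxdy_atD l m a b : {morph dxdy_at l m a b : e e' / e + e'}.
Proof.
move=> e e'; rewrite /dxdy_at derivnD map_polyD_morph ?raddf0 //.
  by rewrite !hornerD mulrDr.
exact: derivnD.
Qed.

Lemma dy_at_ptensor m a f g :
  dy_at m a (ptensor f g) = (((m`!)%:R)^-1 * (f^`(m)).[a])%:P * g.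
Proof.
by rewrite /dy_at derivn_ptensor horner_ptensor -mul_polyC mulrA polyCM.
Qed.

Lemma dx_at_ptensor m a f g :
  dx_at m a (ptensor f g) = (((m`!)%:R)^-1 * (g^`(m)).[a]) *: f.
Proof.
by rewrite /dx_at map_hornerx_ptensor mulrC -mul_polyC mulrA -polyCM mul_polyC.
Qed.

Lemma dxdy_at_ptensor l m a b f g : dxdy_at l m a b (ptensor f g) =
  ((l`!)%:R)^-1 * ((m`!)%:R)^-1 * ((f^`(m)).[a] * (g^`(l)).[b]).
Proof.
rewrite /dxdy_at derivn_ptensor map_derivn_ptensor horner_ptensor.
by rewrite hornerM hornerC.
Qed.

End BivariateJets.

Lemma map_mxcol (T T' : Type) (f : T -> T') n (p_ : 'I_n -> nat) m
  (B_ : forall i, 'M[T]_(p_ i, m)) :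
  map_mx f (\mxcol_i B_ i) = \mxcol_i map_mx f (B_ i).
Proof. by apply/matrixP => i j; rewrite !mxE. Qed.

Lemma map_mxrow (T T' : Type) (f : T -> T') n (q_ : 'I_n -> nat) m
  (B_ : forall i, 'M[T]_(m, q_ i)) :
  map_mx f (\mxrow_i B_ i) = \mxrow_i map_mx f (B_ i).
Proof. by apply/matrixP => i j; rewrite !mxE. Qed.

Section JetsOfKernel.
Variables (C : fieldType) (p : nat).
Local Notation cM := (map_mx (@polyC C)).
Local Notation PM := ('M[{poly C}]_p).
Local Notation BPM := ('M[{poly {poly C}}]_p).

Section Points.
Variables (q : nat) (pts : 'I_q -> C) (mult : 'I_q -> nat).

Lemma jet01D (K K' : BPM) :
  jet01 pts mult (K + K') = jet01 pts mult K + jet01 pts mult K'.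
Proof.
rewrite /jet01 -mxcolD; apply: eq_mxcol => j; rewrite -mxcolD.
by apply: eq_mxcol => m; apply/matrixP => i l; rewrite !mxE; apply: dy_atD.
Qed.

Lemma jet10D (K K' : BPM) :
  jet10 pts mult (K + K') = jet10 pts mult K + jet10 pts mult K'.
Proof.
rewrite /jet10 -mxrowD; apply: eq_mxrow => j; rewrite -mxrowD.
by apply: eq_mxrow => m; apply/matrixP => i l; rewrite !mxE; apply: dx_atD.
Qed.

Lemma jet01_kernel_term (Q : PM) (A : 'M[C]_p) (P : PM) :
  jet01 pts mult (kernel_term Q A P) = cM ((jetRow pts mult Q)^T *m A) *m P.
Proof.
rewrite /jet01 /jetRow tr_mxrow mxcol_mul map_mxcol mxcol_mul.
apply: eq_mxcol => j; rewrite tr_mxrow mxcol_mul map_mxcol mxcol_mul.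
apply: eq_mxcol => m; apply/matrixP => i l; rewrite mxE.
rewrite -[_ *: _]/(dy_at m (pts j) _) kernel_termE.
rewrite (big_additive (dy_atD m (pts j))) mxE; apply: eq_bigr => k' _.
rewrite (big_additive (dy_atD m (pts j))) !mxE rmorph_sum mulr_suml.
apply: eq_bigr => k _.
by rewrite dy_at_ptensor /= !mxE [in RHS]polyCM mulrA.
Qed.

Lemma jet10_kernel_term (Q : PM) (A : 'M[C]_p) (P : PM) :
  jet10 pts mult (kernel_term Q A P) = Q^T *m cM (A *m jetRow pts mult P).
Proof.
rewrite /jet10 /jetRow mul_mxrow map_mxrow mul_mxrow.
apply: eq_mxrow => j; rewrite mul_mxrow map_mxrow mul_mxrow.
apply: eq_mxrow => m; apply/matrixP => i l; rewrite mxE.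
rewrite -[_ *: _]/(dx_at m (pts j) _) kernel_termE.
rewrite (big_additive (dx_atD m (pts j))) mxE.
under eq_bigr do rewrite (big_additive (dx_atD m (pts j))).
rewrite exchange_big; apply: eq_bigr => k _; rewrite !mxE /= rmorph_sum.
rewrite mulr_sumr; apply: eq_bigr => k' _.
rewrite dx_at_ptensor /= !mxE -mul_polyC mulrC; congr (_ * _); congr (_%:P).
rewrite mul_polyC derivnZ hornerZ; ring.
Qed.

End Points.

Lemma jetKD q qt (x : 'I_q -> C) k (xt : 'I_qt -> C) kt (K K' : BPM) :
  jetK x k xt kt (K + K') = jetK x k xt kt K + jetK x k xt kt K'.
Proof.
rewrite /jetK -mxblockD; apply: eq_mxblock => j b; rewrite -mxblockD.
apply: eq_mxblock => m l; apply/matrixP => i i'; rewrite !mxE.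
exact: (dxdy_atD l m (x j) (xt b)).
Qed.

Lemma jetK_kernel_term q qt (x : 'I_q -> C) k (xt : 'I_qt -> C) kt
    (Q : PM) (A : 'M[C]_p) (P : PM) :
  jetK x k xt kt (kernel_term Q A P)
  = (jetRow x k Q)^T *m A *m jetRow xt kt P.
Proof.
rewrite /jetK /jetRow tr_mxrow mxcol_mul mul_mxcol_mxrow.
apply: eq_mxblock => j b; rewrite tr_mxrow mxcol_mul mul_mxcol_mxrow.
apply: eq_mxblock => m l; apply/matrixP => i i'; rewrite mxE.
rewrite -[_ * _]/(dxdy_at l m (x j) (xt b) _) kernel_termE.
rewrite (big_additive (dxdy_atD l m (x j) (xt b))) mxE; apply: eq_bigr => k' _.
rewrite (big_additive (dxdy_atD l m (x j) (xt b))) !mxE mulr_suml.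
apply: eq_bigr => kk _.
rewrite dxdy_at_ptensor !mxE mul_polyC derivnZ hornerZ; ring.
Qed.

End JetsOfKernel.

Section KernelK.
Variables (C : fieldType) (p : nat).
Variables (S1 S2 : nat -> nat -> 'M[C]_p) (H : nat -> 'M[C]_p) (N : nat).

Lemma jet01_kernelK q (pts : 'I_q -> C) mult :
  jet01 pts mult (kernelK S1 S2 H N) = kernel_jet (jetRow pts mult) S1 S2 H N.
Proof.
rewrite /kernelK (big_additive (@jet01D _ _ _ _ _)).
by apply: eq_bigr => j _; rewrite jet01_kernel_term.
Qed.

Lemma tr_jet10_kernelK q (pts : 'I_q -> C) mult :
  (jet10 pts mult (kernelK S1 S2 H N))^T
  = kernel_jet (jetRow pts mult) S2 S1 (fun n => (H n)^T) N.
Proof.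
rewrite /kernelK (big_additive (@jet10D _ _ _ _ _)).
rewrite linear_sum; apply: eq_bigr => j _ /=.
by rewrite jet10_kernel_term trmx_mul trmxK map_trmx trmx_mul trmx_inv.
Qed.

Lemma jetK_kernelK q qt (x : 'I_q -> C) k (xt : 'I_qt -> C) kt :
  jetK x k xt kt (kernelK S1 S2 H N)
  = kernel_jet2 (jetRow xt kt) (jetRow x k) S1 S2 H N.
Proof.
rewrite /kernelK (big_additive (@jetKD _ _ _ _ _ _ _ _)).
by apply: eq_bigr => j _; rewrite jetK_kernel_term.
Qed.

End KernelK.

Theorem mainTheorem10 (R : realType) (p q qt : nat)
    (x : 'I_q -> R) (k : 'I_q -> nat) (xt : 'I_qt -> R) (kt : 'I_qt -> nat)
    (beta : 'I_qt -> 'I_q -> nat -> nat -> 'M[R[i]]_p)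
    (G : nat -> nat -> 'M[R[i]]_p)
    (S1 S2 : nat -> nat -> 'M[R[i]]_p) (H : nat -> 'M[R[i]]_p)
    (S1h S2h : nat -> nat -> 'M[R[i]]_p) (Hh : nat -> 'M[R[i]]_p) :
  let xc := fun j => toC (x j) in
  let xtc := fun b => toC (xt b) in
  let u := formU G in
  let v := formV xc k xtc kt beta in
  let uh := fun P Q => u P Q + v P Q in
  (0 < p)%N ->
  injective x -> (forall j, 0 < k j)%N ->
  injective xt -> (forall b, 0 < kt b)%N ->
  quasidefinite u -> quasidefinite uh ->
  gauss_factorization (moment u) S1 S2 H ->
  gauss_factorization (moment uh) S1h S2h Hh ->
  beta_lin_indep k xtc kt beta ->
  perpR_trivial u (in_ideal xtc kt) \/ perpL_trivial u (in_ideal xc k) ->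
  forall n : nat, (0 < n)%N ->
  let K := kernelK S1 S2 H n.-1 in
  let JtK := jetK xc k xtc kt K in
  let bM := betaMx k kt beta in
  let P1 := polOf S1 n in
  let P2 := polOf S2 n in
  let M := invmx (1%:M + bM *m JtK) in
  [/\ 1%:M + JtK *m bM \in unitmx,
      1%:M + bM *m JtK \in unitmx,
      polOf S1h n
        = P1 - map_mx polyC (jetRow xtc kt P1 *m M *m bM) *m jet01 xc k K,
      (polOf S2h n)^T
        = P2^T - jet10 xtc kt K *m map_mx polyC (M *m bM *m (jetRow xc k P2)^T)
    & Hh n = H n + jetRow xtc kt P1 *m M *m bM *m (jetRow xc k P2)^T].
Proof.
move=> xc xtc u v uh p_gt0 _ _ _ _ u_qd uh_qd u_gauss uh_gauss _ _ [//|N] _.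
move=> K JtK bM P1 P2 M.
have u_bilin := mxbilinear_formU G.
have uhE P Q : uh P Q = u P Q + jetRow xtc kt P *m bM *m (jetRow xc k Q)^T.
  by rewrite /uh /v formV_jet.
have JtD := @jetRowD _ p _ xtc kt; have JtM := @jetRowM _ p _ xtc kt.
have JD := @jetRowD _ p _ xc k; have JM := @jetRowM _ p _ xc k.
have [unit_bJ P1hE HhE] := perturbation_formulas p_gt0 u_bilin JtD JtM JD JM
  uhE u_qd uh_qd u_gauss uh_gauss N.
have [unit_bJ_tr P2hE _] := perturbation_formulas p_gt0 (mxbilinear_tr u_bilin)
  JD JM JtD JtM (trform_perturbed uhE) (quasidefinite_tr u_qd)
  (quasidefinite_tr uh_qd) (gauss_factorization_tr u_gauss)
  (gauss_factorization_tr uh_gauss) N.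
rewrite -tr_kernel_jet2 -jetK_kernelK -/K -/JtK in unit_bJ_tr P2hE.
rewrite -jetK_kernelK -/K -/JtK in unit_bJ P1hE HhE.
have unit_Jb : 1%:M + JtK *m bM \in unitmx.
  by rewrite -unitmx_tr linearD /= trmx_mul tr_scalar_mx.
split=> //; first by rewrite P1hE jet01_kernelK.
rewrite P2hE -tr_jet10_kernelK linearB /= trmx_mul trmxK map_trmx.
congr (_ - _ *m map_mx _ _).
rewrite !trmx_mul trmxK trmx_inv linearD /= trmx_mul !trmxK tr_scalar_mx.
by rewrite /M (push_through_invmx unit_bJ unit_Jb) mulmxA.
Qed.
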